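(* Let $\mathcal A=\{A_i\}_{i\in\Lambda}$ be a finite collection of $SL_2(\mathbb R)$ matrices with a strictly invariant multicone $U$, let $\Phi=\{\varphi_{A_i}\}_{i\in\Lambda}$ be the induced IFS on $\mathbb{RP}^1$, and let $p=(p_i)_{i\in\Lambda}$ be a probability vector with all $p_i>0$. Then $\chi_{\Phi,p}=2\chi_{\mathcal A,p}$.
   Context: $\mathbb{RP}^1\cong[0,\pi)\cong\mathbb R/\pi\mathbb Z$; $\varphi_A$ is the induced action and derivatives are in this coordinate. A strictly invariant multicone is a proper nonempty open $U\subset\mathbb{RP}^1$ with finitely many components having disjoint closures and $\varphi_{A_i}(\overline U)\subset U$ for all $i$. Write $A_{\mathbf i}=A_{i_1}\cdots A_{i_n}$ and $\varphi_{\mathbf i}=\varphi_{A_{i_1}}\circ\cdots\circ\varphi_{A_{i_n}}$. With $i_1,i_2,\ldots$ chosen i.i.d. according to $p$: $\chi_{\mathcal A,p}$ is the almost sure value of $\lim_n\frac1n\log\|A_{i_1\cdots i_n}\|$, and, for a fixed $x_0\in U$, $\chi_{\Phi,p}$ is the almost sure value of $\lim_n-\frac1n\log|(\varphi_{i_1\cdots i_n})'(x_0)|$. *)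

From HB Require Import structures.
From mathcomp Require Import all_boot all_order all_algebra.
From mathcomp Require Import all_classical all_reals all_analysis.
Set Implicit Arguments. Unset Strict Implicit. Unset Printing Implicit Defensive.
Import Order.TTheory GRing.Theory Num.Theory.
Import numFieldNormedType.Exports.
Local Open Scope classical_set_scope.
Local Open Scope ring_scope.

Section Defs.
Variable R : realType.

Definition vnorm (v : 'cV[R]_2) : R := Num.sqrt (v 0 0 ^+ 2 + v 1 0 ^+ 2).

Definition opnorm (M : 'M[R]_2) : R :=
  sup [set vnorm (M *m v) | v in [set v : 'cV[R]_2 | vnorm v = 1]].

(* Unit vector of angle theta: the line it spans is the point theta of
   RP^1 = R / pi Z. *)
Definition dirv (t : R) : 'cV[R]_2 := \col_i (if i == 0 then cos t else sin t).

(* Representative in [0, pi) of the line through (a, b) <> 0. *)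
Definition line_angle (a b : R) : R :=
  if a == 0 then pi / 2
  else let t := atan (b / a) in if t < 0 then t + pi else t.

(* Induced action phi_M on RP^1 = [0,pi) = R / pi Z (as a pi-periodic
   function R -> [0, pi)). *)
Definition phiA (M : 'M[R]_2) (t : R) : R :=
  let w := M *m dirv t in line_angle (w 0 0) (w 1 0).

Definition phiw (k : nat) (A : 'I_k -> 'M[R]_2) (w : nat -> 'I_k) (n : nat)
  : R -> R := foldr (fun j f => phiA (A (w j)) \o f) id (iota 0 n).

Definition Aw (k : nat) (A : 'I_k -> 'M[R]_2) (w : nat -> 'I_k) (n : nat)
  : 'M[R]_2 := \prod_(j < n) A (w j).

(* Reduction of a difference of coordinates modulo pi into [-pi/2, pi/2). *)
Definition cwrap (d : R) : R := d - pi * (Num.floor (d / pi + 2^-1))%:~R.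

(* Derivative at x of a map f of R / pi Z (given in the coordinate [0,pi),
   i.e. by any representative function R -> R), computed in the coordinate:
   the derivative at 0 of h |-> (f (x + h) - f x) mod pi. *)
Definition circ_deriv (f : R -> R) (x : R) : R :=
  derive1 (fun h => cwrap (f (x + h) - f x)) 0.

(* Strictly invariant multicone, written in the coordinate R / pi Z:
   U (a pi-periodic subset of R) is a finite nonempty union of open arcs
   (a_j, b_j) mod pi whose closures are pairwise disjoint (in particular
   each arc is proper, so U is proper), and phi_{A_i}(closure U) c U. *)
Definition multicone (k : nat) (A : 'I_k -> 'M[R]_2) (U : set R) : Prop :=
  (exists (n : nat) (a b : 'I_n -> R),
    [/\ (0 < n)%N,
        (forall j, a j < b j),
        (forall x, U x <-> exists j (m : int),
            a j + m%:~R * pi < x /\ x < b j + m%:~R * pi) &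
        (forall (j j' : 'I_n) (m : int), (j != j') || (m != 0) ->
            forall x, ~ (a j <= x /\ x <= b j /\
                         a j' + m%:~R * pi <= x /\ x <= b j' + m%:~R * pi))])
  /\ (forall i x, closure U x -> U (phiA (A i) x)).

Definition iid_law (d : measure_display) (T : measurableType d)
  (P : probability T R) (k : nat) (p : 'I_k -> R) (X : nat -> T -> 'I_k) : Prop :=
  (forall n i, measurable (X n @^-1` [set i])) /\
  (forall (n : nat) (w : 'I_n -> 'I_k),
     P [set t | forall j : 'I_n, X j t = w j] = (\prod_(j < n) p (w j))%:E).

End Defs.

From HB Require Import structures.
From mathcomp Require Import all_boot all_order all_algebra.
From mathcomp Require Import all_classical all_reals all_analysis.
From mathcomp Require Import ring lra.
Set Implicit Arguments. Unset Strict Implicit.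
Import Order.TTheory GRing.Theory Num.Theory.
Import numFieldNormedType.Exports.
Local Open Scope classical_set_scope.
Local Open Scope ring_scope.

(* For M in SL_2(R) the induced map of RP^1 has derivative |M u_x|^-2 at x,
   where u_x is the unit vector of angle x, so it suffices that |A_w u_x0| and
   ||A_w|| be comparable uniformly in the word w.  The multicone gives this.
   Fix a direction d outside U and put y = A_w^-1 d.  Forward invariance puts
   y outside U, hence uniformly transverse to u_x0, so
   |A_w u_x0| >= |det(A_w u_x0, d)| = |det(u_x0, y)| >= c |y|.  Conversely,
   for u in U the vector A_w u lies in A_i U, i the first letter of w, which
   stays away from d, so |A_w u| <= C |det(A_w u, d)| <= C |y|; applied to two
   independent vectors of U this bounds ||A_w|| by a multiple of |y|.
   The comparison holds for every word. *)

Section PlaneGeometry.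
Variable R : realType.
Implicit Types (M : 'M[R]_2) (u v z : 'cV[R]_2).

Lemma lift0_ord2 : (lift ord0 ord0 : 'I_2) = 1. Proof. exact: val_inj. Qed.

Lemma ord2P (i : 'I_2) : i = 0 \/ i = 1.
Proof. by case: i => [[|[|//]]] Hi; [left | right]; apply: val_inj. Qed.

Lemma mulmx_col0 M v : (M *m v) 0 0 = M 0 0 * v 0 0 + M 0 1 * v 1 0.
Proof. by rewrite !mxE !big_ord_recl big_ord0 addr0 lift0_ord2. Qed.

Lemma mulmx_col1 M v : (M *m v) 1 0 = M 1 0 * v 0 0 + M 1 1 * v 1 0.
Proof. by rewrite !mxE !big_ord_recl big_ord0 addr0 lift0_ord2. Qed.

Lemma det_mx22 M : \det M = M 0 0 * M 1 1 - M 0 1 * M 1 0.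
Proof.
rewrite (expand_det_row _ 0) !big_ord_recl big_ord0 addr0 /cofactor !det_mx11.
rewrite !mxE /= lift0_ord2 (_ : lift 1 0 = 0 :> 'I_2); last exact: val_inj.
by rewrite /bump /= expr0 expr1 mul1r mulN1r mulrN.
Qed.

Lemma dirv0 (t : R) : dirv t 0 0 = cos t. Proof. by rewrite mxE. Qed.
Lemma dirv1 (t : R) : dirv t 1 0 = sin t. Proof. by rewrite mxE. Qed.
Lemma scalecv a v i : (a *: v) i 0 = a * v i 0. Proof. by rewrite mxE. Qed.

Lemma col2P u v : u 0 0 = v 0 0 -> u 1 0 = v 1 0 -> u = v.
Proof.
by move=> e0 e1; apply/matrixP => i j; rewrite (ord1 j); case: (ord2P i) => ->.
Qed.

Lemma col2_neq0 v : v != 0 -> (v 0 0 != 0) || (v 1 0 != 0).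
Proof.
move=> v0; rewrite -negb_and; apply: contra v0 => /andP[/eqP e0 /eqP e1].
by apply/eqP/col2P; rewrite mxE.
Qed.

Definition det2 u v := u 0 0 * v 1 0 - u 1 0 * v 0 0.
Definition dot2 u v := u 0 0 * v 0 0 + u 1 0 * v 1 0.

Lemma det2M M u v : det2 (M *m u) (M *m v) = \det M * det2 u v.
Proof. by rewrite /det2 !mulmx_col0 !mulmx_col1 det_mx22; ring. Qed.

Lemma det2C u v : det2 u v = - det2 v u.
Proof. by rewrite /det2; ring. Qed.

Lemma det2Zl a u v : det2 (a *: u) v = a * det2 u v.
Proof. by rewrite /det2 !scalecv; ring. Qed.

Lemma det2Zr a u v : det2 u (a *: v) = a * det2 u v.
Proof. by rewrite /det2 !scalecv; ring. Qed.

Lemma det2_dirv (s t : R) : det2 (dirv s) (dirv t) = sin (t - s).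
Proof. by rewrite /det2 !dirv0 !dirv1 sinB; ring. Qed.

Lemma dot2_dirv (s t : R) : dot2 (dirv s) (dirv t) = cos (t - s).
Proof. by rewrite /dot2 !dirv0 !dirv1 cosB; ring. Qed.

Lemma vnorm_ge0 v : 0 <= vnorm v. Proof. exact: sqrtr_ge0. Qed.

Lemma sqr_vnorm v : vnorm v ^+ 2 = dot2 v v.
Proof. by rewrite sqr_sqrtr ?addr_ge0 ?sqr_ge0 // /dot2 !expr2. Qed.

Lemma vnorm_gt0 v : v != 0 -> 0 < vnorm v.
Proof.
move=> /col2_neq0 v0; rewrite sqrtr_gt0.
by case/orP: v0 => ?; [apply: ltr_pwDl | apply: ltr_wpDl];
  rewrite ?sqr_ge0 ?exprn_even_gt0.
Qed.

Lemma vnorm_dirv (t : R) : vnorm (dirv t) = 1.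
Proof. by rewrite /vnorm dirv0 dirv1 cos2Dsin2 sqrtr1. Qed.

Lemma vnormZ a v : vnorm (a *: v) = `|a| * vnorm v.
Proof. by rewrite /vnorm !scalecv !exprMn -mulrDr sqrtrM ?sqr_ge0 // sqrtr_sqr. Qed.

Lemma lagrange2 u v :
  (vnorm u * vnorm v) ^+ 2 = det2 u v ^+ 2 + dot2 u v ^+ 2.
Proof. by rewrite exprMn !sqr_vnorm /det2 /dot2; ring. Qed.

Lemma det2_le u v : `|det2 u v| <= vnorm u * vnorm v.
Proof.
rewrite -ler_sqr ?nnegrE ?mulr_ge0 ?vnorm_ge0 // lagrange2 real_normK ?num_real //.
by rewrite lerDl sqr_ge0.
Qed.

Lemma dot2_le u v : dot2 u v <= vnorm u * vnorm v.
Proof.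
apply: le_trans (ler_norm _) _.
rewrite -ler_sqr ?nnegrE ?mulr_ge0 ?vnorm_ge0 // lagrange2 real_normK ?num_real //.
by rewrite lerDr sqr_ge0.
Qed.

Lemma vnormD u v : vnorm (u + v) <= vnorm u + vnorm v.
Proof.
rewrite -ler_sqr ?nnegrE ?addr_ge0 ?vnorm_ge0 // sqr_vnorm sqrrD !sqr_vnorm.
have := dot2_le u v; rewrite /dot2 !mxE; lra.
Qed.

Lemma vnorm_coord_le v i : `|v i 0| <= vnorm v.
Proof.
rewrite -ler_sqr ?nnegrE ?vnorm_ge0 // real_normK ?num_real // sqr_vnorm /dot2 -!expr2.
by case: (ord2P i) => ->; rewrite ?lerDl ?lerDr sqr_ge0.
Qed.

Definition mxabs M := `|M 0 0| + `|M 0 1| + `|M 1 0| + `|M 1 1|.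

Lemma vnorm_mulmx_le M v : vnorm (M *m v) <= mxabs M * vnorm v.
Proof.
have [v0 v1] := (vnorm_coord_le v 0, vnorm_coord_le v 1).
have row_le a b : `|a * v 0 0 + b * v 1 0| <= (`|a| + `|b|) * vnorm v.
  by rewrite mulrDl; apply: le_trans (ler_normD _ _) _; rewrite !normrM lerD ?ler_wpM2l.
have sum_le : vnorm (M *m v) <= `|(M *m v) 0 0| + `|(M *m v) 1 0|.
  rewrite -ler_sqr ?nnegrE ?addr_ge0 ?vnorm_ge0 // sqr_vnorm /dot2 sqrrD.
  by rewrite !real_normK ?num_real // -!expr2 addrAC lerDl mulrn_wge0 // mulr_ge0.
apply: le_trans sum_le _; rewrite mulmx_col0 mulmx_col1 /mxabs -addrA mulrDl.
by rewrite lerD // row_le.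
Qed.
End PlaneGeometry.

Section OperatorNorm.
Variable R : realType.
Implicit Types (M : 'M[R]_2) (u v z : 'cV[R]_2).

Lemma opnorm_ub M v : vnorm v = 1 -> vnorm (M *m v) <= opnorm M.
Proof.
move=> v1; apply: sup_upper_bound; last by exists v.
split; first by exists (vnorm (M *m v)), v.
exists (mxabs M) => _ [u /= u1 <-].
by rewrite -[mxabs M]mulr1 -u1 vnorm_mulmx_le.
Qed.

Lemma opnorm_le M K :
  (forall v, vnorm v = 1 -> vnorm (M *m v) <= K) -> opnorm M <= K.
Proof.
move=> MK; apply: ge_sup; last by move=> _ [v /= v1 <-]; exact: MK.
by exists (vnorm (M *m dirv 0)), (dirv 0); rewrite //= vnorm_dirv.
Qed.

Lemma det2_decomp u v z : det2 u v != 0 ->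
  z = (det2 z v / det2 u v) *: u + (det2 u z / det2 u v) *: v.
Proof.
rewrite /det2 => uv; apply: col2P; rewrite !mxE; move: uv;
  by move: (u 0 0) (u 1 0) (v 0 0) (v 1 0) (z 0 0) (z 1 0) => a b c d e f h; field.
Qed.

Lemma opnorm_det2_le M u v : vnorm u = 1 -> vnorm v = 1 ->
  opnorm M * `|det2 u v| <= vnorm (M *m u) + vnorm (M *m v).
Proof.
move=> u1 v1; have [->|uv] := eqVneq (det2 u v) 0.
  by rewrite normr0 mulr0 addr_ge0 ?vnorm_ge0.
rewrite -ler_pdivlMr ?normr_gt0 // mulrDl; apply: opnorm_le => z z1.
rewrite {1}(det2_decomp z uv) mulmxDr -!scalemxAr.
apply: le_trans (vnormD _ _) _; rewrite !vnormZ !normrM !normfV.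
rewrite [X in X + _ <= _]mulrAC [X in _ + X <= _]mulrAC.
apply: lerD; rewrite ler_wpM2r ?invr_ge0 // ler_piMl ?vnorm_ge0 //.
- by have := det2_le z v; rewrite z1 v1 mulr1.
- by have := det2_le u z; rewrite z1 u1 mulr1.
Qed.

Lemma unitmx_det1 M : \det M = 1 -> M \in unitmx.
Proof. by move=> M1; rewrite unitmxE M1 unitr1. Qed.

Lemma mulmx_neq0 M v : M \in unitmx -> v != 0 -> M *m v != 0.
Proof. by move=> Mu; apply: contraNneq => Mv0; rewrite -(mulKmx Mu v) Mv0 mulmx0. Qed.

End OperatorNorm.

Section Angles.
Variable R : realType.
Implicit Types (s t z : R) (S : set R) (M : 'M[R]_2) (u v : 'cV[R]_2).

Definition pi_periodic S := forall t (m : int), S t -> S (t + m%:~R * pi).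

Lemma pi_periodicE S t (m : int) : pi_periodic S -> S (t + m%:~R * pi) <-> S t.
Proof.
move=> Sper; split; last exact: Sper.
by move/(Sper _ (- m)); rewrite mulrNz mulNr addrK.
Qed.

Lemma pi_periodicC S : pi_periodic S -> pi_periodic (~` S).
Proof. by move=> Sper t m nSt /(pi_periodicE _ _ Sper). Qed.

Lemma sqr_expN1 (n : nat) : ((-1) ^+ n) ^+ 2 = 1 :> R.
Proof. by rewrite -exprM mulnC exprM expr2 mulrNN mulr1 expr1n. Qed.

Lemma alternatingz (f : R -> R) : alternating f pi ->
  forall z (m : int), f (z + m%:~R * pi) = (-1) ^+ `|m|%N * f z.
Proof.
move=> falt z [] n; first by rewrite -pmulrn mulr_natl (alternatingn falt).
have := alternatingn falt n.+1 (z + (Negz n)%:~R * pi).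
by rewrite NegzE mulrNz mulNr -pmulrn mulr_natl addrNK => ->; rewrite mulrA -expr2 sqr_expN1 mul1r.
Qed.

Lemma tanDpiz z (m : int) : tan (z + m%:~R * pi) = tan z.
Proof.
rewrite /tan !(alternatingz (@sinDpi R)) !(alternatingz (@cosDpi R)).
by rewrite invfM mulrACA divff ?mul1r // expf_neq0 // oppr_eq0 oner_eq0.
Qed.

Lemma cwrapE z : cwrap z = z + (- Num.floor (z / pi + 2^-1))%:~R * pi.
Proof. by rewrite /cwrap mulrNz mulNr mulrC. Qed.

Lemma cwrap_bounds z : - (pi / 2) <= cwrap z < pi / 2.
Proof.
have pi0 := pi_gt0 R; rewrite /cwrap; set m := Num.floor _.
have e : (z / pi + 2^-1) * pi = z + pi / 2 by rewrite mulrDl divfK ?gt_eqF // mulrC.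
have m_le : m%:~R * pi <= z + pi / 2 by rewrite -e ler_pM2r // floor_le.
have m_gt : z + pi / 2 < m%:~R * pi + pi.
  by rewrite -e -[X in _ < _ + X]mul1r -mulrDl ltr_pM2r // -intrD1 floorD1_gt.
rewrite [pi * m%:~R]mulrC; move: m_le m_gt; move: (m%:~R * pi) => mpi ? ?.
by apply/andP; split; lra.
Qed.

Lemma abs_sin_cwrap z : `|sin (cwrap z)| = `|sin z|.
Proof. by rewrite cwrapE (alternatingz (@sinDpi R)) normrM normrX normrN1 expr1n mul1r. Qed.

Lemma abs_cos_cwrap z : `|cos (cwrap z)| = `|cos z|.
Proof. by rewrite cwrapE (alternatingz (@cosDpi R)) normrM normrX normrN1 expr1n mul1r. Qed.

Lemma cwrap_atan z : cos z != 0 -> cwrap z = atan (tan z).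
Proof.
move=> cz; have /andP[lo hi] := cwrap_bounds z.
have lo' : - (pi / 2) < cwrap z.
  rewrite lt_neqAle lo andbT; apply: contra cz => /eqP e.
  by rewrite -normr_eq0 -abs_cos_cwrap -e cosN cos_pihalf normr0.
by rewrite -[in tan z](tanDpiz z (- Num.floor (z / pi + 2^-1))) -cwrapE tanK // in_itv /= lo' hi.
Qed.

Lemma sin_eq0_int z : sin z = 0 -> exists m : int, z = m%:~R * pi.
Proof.
move=> sz; exists (Num.floor (z / pi + 2^-1)).
have /andP[lo hi] := cwrap_bounds z.
have : sin (cwrap z) = sin 0 by rewrite sin0; apply/eqP/normr0P; rewrite abs_sin_cwrap sz normr0.
move/sin_inj; rewrite !in_itv /= lo ltW // oppr_le0 divr_ge0 ?pi_ge0 //.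
by move=> /(_ isT isT) /eqP; rewrite /cwrap subr_eq0 mulrC => /eqP.
Qed.

Lemma sin_sep S s : pi_periodic S -> nbhs s S ->
  exists2 c, 0 < c & forall t, ~ S t -> c <= `|sin (t - s)|.
Proof.
move=> Sper /nbhs_ballP[r r0 rS]; have pi0 := pi_gt0 R.
pose r' := Num.min r (pi / 2).
have r'0 : 0 < r' by rewrite lt_min r0 divr_gt0.
have [r'r r'pi] : r' <= r /\ r' <= pi / 2 by split; rewrite ge_min lexx ?orbT.
have in_r' a : `|a| <= r' -> a \in `[- (pi / 2), pi / 2].
  by rewrite ler_norml in_itv /= => /andP[? ?]; apply/andP; split; lra.
exists (sin r'); first by apply: sin_gt0_pi; rewrite r'0; lra.
(* If |sin (t - s)| < sin r', then t - s reduced mod pi into [-pi/2, pi/2)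
   has modulus < r', so a pi-translate of t lies in the ball around s. *)
move=> t nSt; rewrite leNgt; apply/negP => small; apply: nSt.
set z := cwrap (t - s); rewrite -abs_sin_cwrap -/z in small.
have /andP[zlo zhi] := cwrap_bounds (t - s).
have zI : z \in `[- (pi / 2), pi / 2] by rewrite in_itv /= zlo ltW.
have r'I : r' \in `[- (pi / 2), pi / 2] by apply: in_r'; rewrite ger0_norm ?(ltW r'0).
have Nr'I : - r' \in `[- (pi / 2), pi / 2] by apply: in_r'; rewrite normrN ger0_norm ?(ltW r'0).
have z_lt : z < r' by rewrite -ltr_sin // (le_lt_trans (ler_norm _) small).
have z_gt : - r' < z.
  by rewrite -ltr_sin // sinN ltrNl (le_lt_trans _ small) // -normrN ler_norm.
have : S (s + z) by apply: rS; rewrite -ball_normE /ball_ /= opprD addNKr normrN ltr_norml; lra.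
by rewrite /z cwrapE addrA (addrC s) subrK => /(pi_periodicE _ _ Sper).
Qed.

Lemma line_angleP (a b : R) : (a != 0) || (b != 0) ->
  exists2 l, l != 0 & a = l * cos (line_angle a b) /\ b = l * sin (line_angle a b).
Proof.
move=> ab; rewrite /line_angle; have [a0|a0] := eqVneq a 0.
  by exists b; rewrite ?cos_pihalf ?sin_pihalf ?mulr0 ?mulr1 //; move: ab; rewrite a0 eqxx.
set t := atan (b / a).
have ct : 0 < cos t by apply: cos_gt0_pihalf; rewrite atan_gtNpi2 atan_ltpi2.
have st : sin t = b / a * cos t by rewrite -[b / a]atanK -/t /tan divfK ?gt_eqF.
case: ifP => _.
  exists (- (a / cos t)); first by rewrite oppr_eq0 mulf_neq0 // invr_eq0 gt_eqF.
  by rewrite cosDpi sinDpi st; split; field; rewrite ?a0 ?gt_eqF.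
exists (a / cos t); first by rewrite mulf_neq0 // invr_eq0 gt_eqF.
by rewrite st; split; field; rewrite ?a0 ?gt_eqF.
Qed.

Lemma line_angleZ (l a b : R) : l != 0 -> line_angle (l * a) (l * b) = line_angle a b.
Proof.
move=> l0; rewrite /line_angle mulf_eq0 (negbTE l0) /=.
by case: eqP => // /eqP a0; rewrite (_ : l * b / (l * a) = b / a) //; field; rewrite a0 l0.
Qed.

Definition ang v := line_angle (v 0 0) (v 1 0).

Lemma ang_polar v : v != 0 -> exists2 l, l != 0 & v = l *: dirv (ang v).
Proof.
move=> /col2_neq0 /line_angleP[l l0 [e0 e1]]; exists l => //.
by apply: col2P; rewrite scalecv ?dirv0 ?dirv1.
Qed.

Lemma angZ (l : R) v : l != 0 -> ang (l *: v) = ang v.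
Proof. by move=> l0; rewrite /ang !scalecv line_angleZ. Qed.

Lemma ang_mulmx M v : v != 0 -> ang (M *m dirv (ang v)) = ang (M *m v).
Proof. by move=> /ang_polar[l l0 {2}->]; rewrite -scalemxAr angZ. Qed.

Lemma dirv_neq0 t : dirv t != 0.
Proof.
apply/eqP => t0; have := vnorm_dirv t.
by rewrite t0 /vnorm !mxE expr0n addr0 sqrtr0 => /eqP; rewrite eq_sym oner_eq0.
Qed.

Lemma ang_dirv t : exists m : int, ang (dirv t) = t + m%:~R * pi.
Proof.
have [l l0 e] := ang_polar (dirv_neq0 t).
have : sin (t - ang (dirv t)) = 0.
  by rewrite -det2_dirv {2}e det2Zr /det2 !dirv0 !dirv1; ring.
by case/sin_eq0_int => m tm; exists (- m); rewrite mulrNz mulNr -tm; ring.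
Qed.

Lemma det2_ang u v : u != 0 -> v != 0 ->
  `|det2 u v| = vnorm u * vnorm v * `|sin (ang v - ang u)|.
Proof.
move=> /ang_polar[l _ {1 2}->] /ang_polar[l' _ {1 2}->].
by rewrite det2Zl det2Zr det2_dirv !vnormZ !vnorm_dirv !normrM; ring.
Qed.

Lemma det2_sep S u : pi_periodic S -> u != 0 -> nbhs (ang u) S ->
  exists2 c, 0 < c & forall v, v != 0 -> ~ S (ang v) ->
    c * (vnorm u * vnorm v) <= `|det2 u v|.
Proof.
move=> Sper u0 /(sin_sep Sper)[c c0 sep]; exists c => // v v0 nSv.
by rewrite det2_ang // mulrC ler_wpM2l ?mulr_ge0 ?vnorm_ge0 ?sep.
Qed.

End Angles.

Section ProjectiveDerivative.
Variable R : realType.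
Implicit Types (x h : R) (M : 'M[R]_2) (u v : 'cV[R]_2).

Lemma det2_dot2_polar u v : u != 0 -> v != 0 -> exists2 l, l != 0 &
  det2 u v = l * sin (ang v - ang u) /\ dot2 u v = l * cos (ang v - ang u).
Proof.
move=> /ang_polar[l l0 eu] /ang_polar[l' l'0 ev]; exists (l * l'); first exact: mulf_neq0.
rewrite {1 3}eu {1 3}ev det2Zl det2Zr det2_dirv; split; first by ring.
by rewrite /dot2 !scalecv -dot2_dirv /dot2; ring.
Qed.

Lemma cwrap_ang_increment M x h : \det M = 1 ->
  dot2 (M *m dirv x) (M *m dirv (x + h)) != 0 ->
  cwrap (ang (M *m dirv (x + h)) - ang (M *m dirv x)) =
  atan (sin h / dot2 (M *m dirv x) (M *m dirv (x + h))).
Proof.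
move=> M1; have Mu := unitmx_det1 M1.
have det_ab : det2 (M *m dirv x) (M *m dirv (x + h)) = sin h.
  by rewrite det2M M1 mul1r det2_dirv addrC addKr.
have [l l0 [dab tab]] := det2_dot2_polar (mulmx_neq0 Mu (dirv_neq0 x))
                                         (mulmx_neq0 Mu (dirv_neq0 (x + h))).
rewrite -det_ab dab tab mulf_eq0 negb_or l0 /= => c0.
by rewrite cwrap_atan // /tan invfM mulrACA divff ?mul1r.
Qed.

Lemma derive1_atan_sin_div (Q : R -> R) : derivable Q 0 1 -> Q 0 != 0 ->
  derive1 (fun h => atan (sin h / Q h)) 0 = (Q 0)^-1.
Proof.
move=> dQ Q0; pose F : R -> R := sin * (fun h => (Q h)^-1).
have dQV : derivable (fun h => (Q h)^-1) 0 1 by apply: derivableV.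
have dF : derivable F 0 1 by apply: derivableM; first exact: derivable_sin.
rewrite (_ : (fun h => _) = atan \o F) // derive1_comp ?derivable_atan //.
rewrite derive1_atan (_ : F 0 = 0); last by change (sin 0 * (Q 0)^-1 = 0); rewrite sin0 mul0r.
rewrite expr0n /= addr0 invr1 mul1r derive1E deriveM //.
by rewrite sin0 scale0r add0r derive_val cos0 [_ *: _]mulr1.
Qed.

Lemma circ_deriv_ang M x : \det M = 1 ->
  circ_deriv (fun t => ang (M *m dirv t)) x = (vnorm (M *m dirv x) ^+ 2)^-1.
Proof.
move=> M1; set u := M *m dirv x.
pose Q : R -> R := (dot2 u u \*: cos) + (dot2 u (M *m dirv (x + pi / 2)) \*: sin).
have QE h : dot2 u (M *m dirv (x + h)) = Q h.
  transitivity (dot2 u u * cos h + dot2 u (M *m dirv (x + pi / 2)) * sin h) => //.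
  rewrite /u /dot2 !mulmx_col0 !mulmx_col1 !dirv0 !dirv1.
  by rewrite cosD sinD cosDpihalf sinDpihalf; ring.
have dQ : derivable Q 0 1.
  by apply: derivableD; apply: derivableZ; [exact: derivable_cos | exact: derivable_sin].
have Q0 : Q 0 = vnorm u ^+ 2 by rewrite -QE addr0 sqr_vnorm.
have Q0_gt0 : 0 < Q 0.
  by rewrite Q0 exprn_gt0 // vnorm_gt0 // mulmx_neq0 ?unitmx_det1 ?dirv_neq0.
have Q_neq0 : \forall h \near 0, Q h != 0.
  have cQ : Q @ 0 --> Q 0 by exact/differentiable_continuous/derivable1_diffP.
  exact: cvgr_neq0 cQ (lt0r_neq0 Q0_gt0).
rewrite /circ_deriv -Q0 -derive1_atan_sin_div ?gt_eqF // !derive1E.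
apply: near_eq_derive; apply: filterS Q_neq0 => h Qh.
by rewrite cwrap_ang_increment // QE.
Qed.

End ProjectiveDerivative.

Section Words.
Variable R : realType.
Variables (k : nat) (A : 'I_k -> 'M[R]_2).
Hypothesis A1 : forall i, \det (A i) = 1.
Implicit Types (w : nat -> 'I_k) (n : nat) (t : R).

Lemma phiwS w n t : phiw A w n.+1 t = phiw A w n (phiA (A (w n)) t).
Proof.
rewrite /phiw -addn1 iotaD foldr_cat /=.
by elim: (iota 0 n) t => //= j s IH t; rewrite IH.
Qed.

Lemma Aw0 w : Aw A w 0 = 1%:M.
Proof. by rewrite /Aw big_ord0. Qed.

Lemma AwS w n : Aw A w n.+1 = Aw A w n *m A (w n).
Proof. by rewrite /Aw big_ord_recr /= mulmxE. Qed.

Lemma AwSl w n : Aw A w n.+1 = A (w 0%N) *m Aw A (fun j => w j.+1) n.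
Proof. by rewrite /Aw big_ord_recl /= mulmxE. Qed.

Lemma det_Aw w n : \det (Aw A w n) = 1.
Proof. by elim: n => [|n IH]; rewrite ?Aw0 ?det1 // AwS det_mulmx IH A1 mulr1. Qed.

Lemma unitmx_Aw w n : Aw A w n \in unitmx.
Proof. exact/unitmx_det1/det_Aw. Qed.

Lemma phiw_ang w n t : phiw A w n.+1 t = ang (Aw A w n.+1 *m dirv t).
Proof.
elim: n t => [|n IH] t; first by rewrite phiwS AwS Aw0 mul1mx.
rewrite phiwS IH /phiA ang_mulmx; first by rewrite [Aw A w n.+2]AwS mulmxA.
exact/mulmx_neq0/dirv_neq0/unitmx_det1.
Qed.

Lemma ln_circ_deriv_phiw w n x :
  - ln `|circ_deriv (phiw A w n.+1) x| = 2 * ln (vnorm (Aw A w n.+1 *m dirv x)).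
Proof.
have -> : phiw A w n.+1 = fun t => ang (Aw A w n.+1 *m dirv t).
  by apply/funext => t; rewrite phiw_ang.
have x_gt0 : 0 < vnorm (Aw A w n.+1 *m dirv x).
  exact/vnorm_gt0/mulmx_neq0/dirv_neq0/unitmx_Aw.
rewrite circ_deriv_ang ?det_Aw // ger0_norm ?invr_ge0 ?exprn_ge0 ?ltW //.
by rewrite lnV ?posrE ?exprn_gt0 // lnXn // opprK mulr_natl.
Qed.

End Words.

Lemma fin_lb_gt0 (R : realFieldType) (I : finType) (f : I -> R) :
  (forall i, 0 < f i) -> exists2 c, 0 < c & forall i, c <= f i.
Proof.
move=> f_gt0; have sum_ge0 (P : pred I) : 0 <= \sum_(i | P i) (f i)^-1.
  by apply: sumr_ge0 => i _; rewrite invr_ge0 ltW.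
exists (1 + \sum_i (f i)^-1)^-1; first by rewrite invr_gt0 ltr_pwDl.
move=> i; rewrite -[f i]invrK lef_pV2 ?posrE ?invr_gt0 ?ltr_pwDl //.
by rewrite (bigD1 i) //= addrCA lerDl addr_ge0.
Qed.

Section ConeEstimate.
Variable R : realType.
Variables (k : nat) (A : 'I_k -> 'M[R]_2) (U : set R) (td x0 : R).
Hypothesis A1 : forall i, \det (A i) = 1.
Hypothesis Uper : pi_periodic U.
Hypothesis Uopen : open U.
Hypothesis Uinv : forall i x, closure U x -> U (phiA (A i) x).
Hypothesis Utd : ~ U td.
Hypothesis Ux0 : U x0.
Implicit Types (w : nat -> 'I_k) (n : nat) (u v : 'cV[R]_2).

Let d := dirv td.

Lemma U_ang_dirv t : U (ang (dirv t)) <-> U t.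
Proof. by have [m ->] := ang_dirv t; exact: pi_periodicE. Qed.

Lemma U_mulmx_closure i v : v != 0 -> closure U (ang v) -> U (ang (A i *m v)).
Proof. by move=> v0 /(Uinv i); rewrite /phiA -/(ang _) ang_mulmx. Qed.

Lemma U_Aw w n v : v != 0 -> U (ang v) -> U (ang (Aw A w n *m v)).
Proof.
elim: n v => [|n IH] v v0 Uv; first by rewrite Aw0 mul1mx.
rewrite AwS -mulmxA; apply: IH; first by rewrite mulmx_neq0 ?unitmx_det1.
exact/U_mulmx_closure/subset_closure.
Qed.

Lemma invmx_Aw_neq0 w n : invmx (Aw A w n) *m d != 0.
Proof. by rewrite mulmx_neq0 ?unitmx_inv ?unitmx_Aw ?dirv_neq0. Qed.

Lemma Aw_dirv_lb : exists2 c, 0 < c & forall w n,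
  c * vnorm (invmx (Aw A w n) *m d) <= vnorm (Aw A w n *m dirv x0).
Proof.
have nbhsU : nbhs (ang (dirv x0)) U.
  by apply: open_nbhs_nbhs; split => //; apply/U_ang_dirv.
have [c c0 sep] := det2_sep Uper (dirv_neq0 x0) nbhsU.
exists c => // w n; set B := Aw A w n; set y := invmx B *m d.
have By : B *m y = d by rewrite mulKVmx ?unitmx_Aw.
have nUy : ~ U (ang y) by move/(U_Aw w n (invmx_Aw_neq0 w n)); rewrite By => /U_ang_dirv.
have := sep y (invmx_Aw_neq0 w n) nUy; rewrite vnorm_dirv mul1r => /le_trans; apply.
rewrite -[det2 _ _]mul1r -(det_Aw A1 w n) -det2M -/B By.
by have := det2_le (B *m dirv x0) d; rewrite vnorm_dirv mulr1.
Qed.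

Lemma mulmx_det2_lb : exists2 c, 0 < c & forall i u, u != 0 -> U (ang u) ->
  c * vnorm (A i *m u) <= `|det2 (A i *m u) d|.
Proof.
have /choice[f f_spec] i : exists c, 0 < c /\ forall u, u != 0 -> U (ang u) ->
    c * vnorm (A i *m u) <= `|det2 (A i *m u) d|.
  have Au := unitmx_det1 (A1 i); set e := invmx (A i) *m d.
  have Ae : A i *m e = d by rewrite mulKVmx.
  have e0 : e != 0 by rewrite mulmx_neq0 ?unitmx_inv ?dirv_neq0.
  (* A_i maps closure U into U and A_i e = d lies outside U. *)
  have nbhsC : nbhs (ang e) (~` U).
    have ncl : (~` closure U) (ang e).
      by move/(U_mulmx_closure i e0); rewrite Ae => /U_ang_dirv.
    by move: ncl; rewrite -interiorC.
  have [c c0 sep] := det2_sep (pi_periodicC Uper) e0 nbhsC.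
  have m_gt0 : 0 < 1 + mxabs (A i) by rewrite ltr_pwDl // !addr_ge0.
  exists (c * vnorm e / (1 + mxabs (A i))); split; first by rewrite !mulr_gt0 ?invr_gt0 ?vnorm_gt0.
  move=> u u0 Uu; have := sep u u0 (fun nUu => nUu Uu).
  rewrite -Ae det2M A1 mul1r det2C normrN => /(le_trans _); apply.
  rewrite mulrAC ler_pdivrMr // -!mulrA !ler_pM2l ?vnorm_gt0 //.
  rewrite mulrC; apply: le_trans (vnorm_mulmx_le _ _) _.
  by rewrite ler_wpM2r ?vnorm_ge0 // lerDr.
have [c c0 c_le] := fin_lb_gt0 (fun i => (f_spec i).1).
exists c => // i u u0 Uu; apply: le_trans ((f_spec i).2 u u0 Uu).
by rewrite ler_wpM2r ?vnorm_ge0.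
Qed.

Lemma exists_U_shift : exists h, [/\ 0 < h, h < pi & U (x0 + h)].
Proof.
have /nbhs_ballP[r r0 rU] : nbhs x0 U by apply: open_nbhs_nbhs.
have pi0 := pi_gt0 R; set h := Num.min (r / 2) (pi / 2).
have h0 : 0 < h by rewrite lt_min !divr_gt0.
have [hr hpi] : h <= r / 2 /\ h <= pi / 2 by split; rewrite ge_min lexx ?orbT.
exists h; split => //; first lra.
by apply: rU; rewrite -ball_normE /ball_ /= opprD addNKr normrN gtr0_norm //; lra.
Qed.

Lemma opnorm_Aw_ub : exists2 C, 0 < C & forall w n,
  opnorm (Aw A w n.+1) <= C * vnorm (invmx (Aw A w n.+1) *m d).
Proof.
have [c c0 lb] := mulmx_det2_lb; have [h [h0 hpi Uh]] := exists_U_shift.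
have s0 : 0 < sin h by apply: sin_gt0_pi; rewrite h0.
exists (2 / (c * sin h)); first by rewrite divr_gt0 ?mulr_gt0.
move=> w n; set B := Aw A w n.+1; set y := invmx B *m d.
have By : B *m y = d by rewrite mulKVmx ?unitmx_Aw.
have ub t : U t -> c * vnorm (B *m dirv t) <= vnorm y.
  move=> Ut; set B' := Aw A (fun j => w j.+1) n.
  have u0 : B' *m dirv t != 0 by rewrite mulmx_neq0 ?unitmx_Aw ?dirv_neq0.
  have Uu : U (ang (B' *m dirv t)) by apply/U_Aw/U_ang_dirv; rewrite ?dirv_neq0.
  rewrite /B AwSl -mulmxA; apply: le_trans (lb _ _ u0 Uu) _.
  rewrite mulmxA -AwSl -/B -By det2M det_Aw // mul1r.
  by have := det2_le (dirv t) y; rewrite vnorm_dirv mul1r.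
have := opnorm_det2_le B (vnorm_dirv x0) (vnorm_dirv (x0 + h)).
rewrite det2_dirv addrC addKr gtr0_norm // => Bsin.
rewrite mulrAC ler_pdivlMr ?mulr_gt0 // mulrCA.
apply: le_trans (ler_wpM2l (ltW c0) Bsin) _.
by rewrite mulrDr mulr_natl mulr2n; apply: lerD; apply: ub.
Qed.

Lemma cone_estimate : exists2 c, 0 < c & forall w n,
  c * opnorm (Aw A w n.+1) <= vnorm (Aw A w n.+1 *m dirv x0).
Proof.
have [c c0 lb] := Aw_dirv_lb; have [C C0 ub] := opnorm_Aw_ub.
exists (c / C); first exact: divr_gt0.
move=> w n; apply: le_trans (lb w n.+1).
rewrite -mulrA; apply: ler_wpM2l; first exact: ltW.
by rewrite ler_pdivrMl // ub.
Qed.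

End ConeEstimate.

Lemma cvg_ln_comparable (R : realType) (N x : nat -> R) (c chi : R) : 0 < c ->
  (forall n, 0 < x n.+1) -> (forall n, c * N n.+1 <= x n.+1 <= N n.+1) ->
  (fun n => n%:R^-1 * ln (N n)) @ \oo --> chi ->
  (fun n => n%:R^-1 * ln (x n)) @ \oo --> chi.
Proof.
move=> c0 x_gt0 xN LN.
have Lc : (fun n : nat => n%:R^-1 * ln c) @ \oo --> 0.
  rewrite -(mul0r (ln c)); apply: cvgM (cvg_cst _).
  by rewrite -cvg_shiftS; exact: cvg_harmonic.
apply: (squeeze_cvgr (f := fun n => n%:R^-1 * ln c + n%:R^-1 * ln (N n))); last exact: LN.
- exists 1%N => // -[|n] // _; have /andP[cNx xN'] := xN n.
  have N_gt0 : 0 < N n.+1 := lt_le_trans (x_gt0 n) xN'.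
  rewrite -mulrDr -lnM ?posrE ?mulr_gt0 //.
  by apply/andP; split; apply: ler_wpM2l; rewrite ?invr_ge0 // ler_ln ?posrE ?mulr_gt0.
- by rewrite -[chi]add0r; apply: cvgD.
Qed.

Lemma multicone_periodic (R : realType) k (A : 'I_k -> 'M[R]_2) U :
  multicone A U -> pi_periodic U.
Proof.
case=> -[n [a [b [_ _ Uarcs _]]]] _ t m /Uarcs[j [m' [lo hi]]].
apply/Uarcs; exists j, (m' + m).
by rewrite intrD mulrDl !addrA !ltrD2r.
Qed.

Lemma multicone_open (R : realType) k (A : 'I_k -> 'M[R]_2) U :
  multicone A U -> open U.
Proof.
case=> -[n [a [b [_ _ Uarcs _]]]] _; rewrite openE => s /Uarcs[j [m [lo hi]]].
have : s \in `](a j + m%:~R * pi), (b j + m%:~R * pi)[ by rewrite in_itv /= lo hi.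
move/near_in_itvoo; apply: filterS => t; rewrite in_itv /= => /andP[lo' hi'].
by apply/Uarcs; exists j, m.
Qed.

Lemma multicone_proper (R : realType) k (A : 'I_k -> 'M[R]_2) U :
  multicone A U -> exists t, ~ U t.
Proof.
case=> -[n [a [b [n0 ab Uarcs disj]]]] _; set j0 : 'I_n := Ordinal n0.
exists (b j0) => /Uarcs[j [m [lo hi]]].
have [e|ne] := boolP ((j0 != j) || (m != 0)).
  by apply: (disj j0 j m e (b j0)); split; [|split; [|split]]; rewrite ?lexx // ltW.
move: ne; rewrite negb_or !negbK => /andP[/eqP ej /eqP em].
by move: hi; rewrite -ej em mul0r addr0 ltxx.
Qed.

Theorem lemma3p5 (R : realType) (k : nat) (A : 'I_k -> 'M[R]_2) (U : set R)
  (p : 'I_k -> R)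
  (hSL : forall i, \det (A i) = 1)
  (hU : multicone A U)
  (hp : forall i, 0 < p i) (hp1 : \sum_i p i = 1)
  (d : measure_display) (T : measurableType d) (P : probability T R)
  (X : nat -> T -> 'I_k) (hX : iid_law P p X)
  (chiA : R)
  (hchiA : {ae P, forall t,
     (fun n : nat => n%:R^-1 * ln (opnorm (Aw A (fun j => X j t) n))) @ \oo
       --> chiA})
  (x0 : R) (hx0 : U x0) :
  {ae P, forall t,
     (fun n : nat => - (n%:R^-1 * ln `|circ_deriv (phiw A (fun j => X j t) n) x0|))
       @ \oo --> 2 * chiA}.
Proof.
have [td Utd] := multicone_proper hU.
have [c c0 cone] := cone_estimate hSL (multicone_periodic hU) (multicone_open hU)
  hU.2 Utd hx0.
apply: filterS hchiA => t LN; set w := fun j => X j t.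
pose x n := vnorm (Aw A w n *m dirv x0).
have x_gt0 n : 0 < x n.+1.
  by rewrite vnorm_gt0 // mulmx_neq0 ?unitmx_Aw ?dirv_neq0.
have xN n : c * opnorm (Aw A w n.+1) <= x n.+1 <= opnorm (Aw A w n.+1).
  by rewrite cone opnorm_ub ?vnorm_dirv.
apply: cvg_trans _ (cvgMl_tmp (a := 2) (cvg_ln_comparable c0 x_gt0 xN LN)).
apply: near_eq_cvg; exists 1%N => // -[|n] // _.
by rewrite /= -mulrN ln_circ_deriv_phiw // mulrCA.
Qed.
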